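(* Let $K$ be a positive integer. Consider a nonempty configuration and an integer shift $G$ with $2^K\le A(G)<2^b$. In one outer iteration of the inter-level sampler, let the number of scanned levels be the number of level indices $\lambda,\lambda-1,\dots$ visited by the scan up to and including the level at which the scan stops (returns, or enters the refinement loop). Its expectation is at most $2b+\frac{N(N+1)}{2^{K+1}}$.
   Context: Fix an integer $b\ge 2$. There is a set $\mathcal L$ of $N$ levels, which are consecutive integers. Each level $\ell$ holds a finite (possibly empty) multiset of normalized significands, each an integer in $[2^{b-1},2^b)$. Let $z$ be the total number of stored significands over all levels; assume $z<2^b$. For each level, $SS_\ell$ is the sum of its significands (so $SS_\ell=0$ iff the level is empty); set $SS_\ell=0$ for integers $\ell\notin\mathcal L$. The level weight is $W_\ell=SS_\ell2^\ell$. For an integer global shift $G$, $A_\ell(G)=\lfloor W_\ell2^G\rfloor+1$ if $SS_\ell>0$ and $A_\ell(G)=0$ if $SS_\ell=0$; $A(G)=\sum_\ell A_\ell(G)$. The configuration is nonempty if $z\ge1$; then $\lambda$ denotes the largest nonempty level. Inter-level sampler (Algorithm 1), with shift $G$ and $A=A(G)$: it performs independent outer iterations. In an outer iteration, draw $x$ uniformly from $\{1,\dots,A\}$ and scan the level indices in decreasing order starting from $\lambda$ (empty levels included, with $A_\ell(G)=0$). At the current level $\ell$: if $x<A_\ell(G)$, return $\ell$; if $x=A_\ell(G)$, run the refinement loop for $m=1,2,\dots$: draw $r$ uniformly from $\{0,\dots,2^b-1\}$ independently, let $t=\lfloor SS_\ell 2^{\ell+G+mb}\rfloor \bmod 2^b$;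 if $r<t$ return $\ell$; else if $r>t$ or $\ell+G+mb\ge 0$, abandon this outer iteration and start a new one; otherwise continue with $m+1$. If $x>A_\ell(G)$, set $x\leftarrow x-A_\ell(G)$ and move to the next lower level. *)

From HB Require Import structures.
From mathcomp Require Import all_boot all_order all_algebra.
Set Implicit Arguments. Unset Strict Implicit. Unset Printing Implicit Defensive.
Import Order.TTheory GRing.Theory Num.Theory.
Local Open Scope ring_scope.

(* A configuration: N consecutive levels lo, lo+1, ..., lo+N-1 (all ints);
   level lo+i (i < N) holds the multiset (sequence) of significands  ms i. *)

Definition normalized (b N : nat) (ms : nat -> seq nat) : Prop :=
  forall i : nat, (i < N)%N -> forall s, s \in ms i -> (2 ^ b.-1 <= s < 2 ^ b)%N.

Definition total_count (N : nat) (ms : nat -> seq nat) : nat :=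
  (\sum_(i < N) size (ms i))%N.

Definition SS (lo : int) (N : nat) (ms : nat -> seq nat) (l : int) : nat :=
  if (lo <= l) && (l < lo + N%:Z) then sumn (ms `|l - lo|%N) else 0%N.

Definition Alev (lo : int) (N : nat) (ms : nat -> seq nat) (G l : int) : int :=
  if (0 < SS lo N ms l)%N
  then Num.floor ((SS lo N ms l)%:R * (2%:R : rat) ^ l * (2%:R : rat) ^ G) + 1
  else 0.

Definition Atot (lo : int) (N : nat) (ms : nat -> seq nat) (G : int) : int :=
  \sum_(i < N) Alev lo N ms G (lo + (i : nat)%:Z).

(* lambda = largest nonempty level (meaningful when the configuration is nonempty) *)
Definition lambda (lo : int) (N : nat) (ms : nat -> seq nat) : int :=
  lo + (\max_(i < N | ms i != [::]) (i : nat))%:Z.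

(* Scan of one outer iteration for the drawn value x, starting at level l,
   returning the number of scanned levels (up to and including the level at
   which the scan stops, i.e. where x <= A_l: return if x < A_l, refinement
   loop if x = A_l).  [fuel] bounds the number of levels; the scan with
   1 <= x <= A(G) started at lambda stops after at most N levels. *)
Fixpoint scan_count (Af : int -> int) (l x : int) (fuel : nat) : nat :=
  match fuel with
  | 0 => 0
  | fuel'.+1 =>
      if x <= Af l then 1
      else (scan_count Af (l - 1) (x - Af l) fuel').+1
  end.

Definition expected_scanned (lo : int) (N : nat) (ms : nat -> seq nat) (G : int) : rat :=
  let A := Atot lo N ms G in
  (A%:~R)^-1 *
  \sum_(1 <= x < `|A|.+1)
     (scan_count (Alev lo N ms G) (lambda lo N ms) x%:Z N)%:R.

(* Write a_j = A_{lambda-j}(G) and w_j = W_{lambda-j} 2^G, so that w_j <= a_j <= w_j + 1.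
   The scan stops after exactly j+1 levels for a_j of the A(G) draws, so the expected count
   is (sum_j (j+1) a_j) / A(G).  Since SS_lambda >= 2^(b-1) while sum_l SS_l <= z 2^b < 2^(2b),
   the weights below lambda decay geometrically: 2^k sum_(j>=k) w_j <= 2^(b+1) w_0.  Abel
   summation then gives sum_j (j+1) w_j <= (b+1) sum_j w_j - (b-2) w_0 <= 2b A(G), and the
   rounding errors add at most sum_j (j+1) = N(N+1)/2 <= A(G) N(N+1)/2^(K+1). *)

From Pilot Require Import Defs.
From HB Require Import structures.
From mathcomp Require Import all_boot all_order all_algebra.
From mathcomp Require Import zify ring lra.
Set Implicit Arguments. Unset Strict Implicit. Unset Printing Implicit Defensive.
Import Order.TTheory GRing.Theory Num.Theory.
Local Open Scope ring_scope.

Lemma sum_index_mul_eq_sum_tails (R : nzSemiRingType) (w : nat -> R) n :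
  \sum_(j < n) j.+1%:R * w j = \sum_(k < n) \sum_(k <= j < n) w j.
Proof.
elim: n => [|n IH]; first by rewrite !big_ord0.
rewrite big_ord_recr /= IH [RHS]big_ord_recr /= big_nat1.
rewrite [in RHS](eq_bigr (fun i : 'I_n => \sum_(i <= j < n) w j + w n)); last first.
  by move=> i _; rewrite big_nat_recr //= ltnW.
by rewrite big_split /= sumr_const card_ord -addrA -mulrSr mulr_natl.
Qed.

Lemma sum_halves_le2 (R : realFieldType) n : \sum_(i < n) (2^-1 : R) ^+ i <= 2.
Proof.
suff -> : \sum_(i < n) (2^-1 : R) ^+ i = 2 - 2 * 2^-1 ^+ n.
  by rewrite gerBl mulr_ge0 // exprn_ge0 // invr_ge0.
elim: n => [|n IH]; first by rewrite big_ord0 expr0 mulr1 subrr.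
rewrite big_ord_recr /= IH exprSr; set x := 2^-1 ^+ n; by field.
Qed.

Lemma sum_index_mul_le_of_geometric_tails (R : realFieldType) (b n : nat)
    (w : nat -> R) :
  (0 < n)%N -> (forall j, 0 <= w j) ->
  (forall k, (k < n)%N -> 2 ^+ k * \sum_(k <= j < n) w j <= 2 ^+ b.+1 * w 0%N) ->
  \sum_(j < n) j.+1%:R * w j <= b.+1%:R * \sum_(j < n) w j - (b%:R - 2) * w 0%N.
Proof.
move=> n_gt0 w_ge0 tail_geom; set T := \sum_(j < n) w j.
have T_w0 : T - w 0%N = \sum_(1 <= j < n) w j.
  by rewrite /T -(big_mkord xpredT) big_ltn // [w 0%N + _]addrC addrK.
have tail_le k : (1 <= k <= n)%N -> \sum_(k <= j < n) w j <= T - w 0%N.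
  by case/andP=> k_ge1 k_le_n; rewrite T_w0 (@big_cat_nat _ _ _ k 1 n) //= lerDr sumr_ge0.
have T_w0_ge0 : 0 <= T - w 0%N by rewrite T_w0 sumr_ge0.
(* [h k] bounds the k-th tail: trivially up to k = b, by the geometric decay beyond. *)
pose h k := if (k <= b)%N then T - w 0%N else w 0%N * 2^-1 ^+ (k - b.+1).
have h_ge0 k : 0 <= h k.
  by rewrite /h; case: ifP => // _; rewrite mulr_ge0 // exprn_ge0 // invr_ge0.
have tail_h k : (1 <= k < n)%N -> \sum_(k <= j < n) w j <= h k.
  case/andP=> k_ge1 k_lt_n; rewrite /h; case: ifP => [_|/negbT].
    by apply: tail_le; rewrite k_ge1 ltnW.
  rewrite -ltnNge => b_lt_k; have := tail_geom k k_lt_n.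
  rewrite -(subnKC b_lt_k) exprD -mulrA ler_pM2l ?exprn_gt0 // exprVn.
  by move=> le_tail; rewrite addKn ler_pdivlMr ?exprn_gt0 // mulrC.
have sum_h : \sum_(1 <= k < b.+1 + n) h k <= b%:R * (T - w 0%N) + 2 * w 0%N.
  rewrite (@big_cat_nat _ _ _ b.+1) //=; last by rewrite leq_addr.
  rewrite (@eq_big_nat _ _ _ 1 b.+1 _ (fun=> T - w 0%N)); last first.
    by move=> i /andP[_ i_le_b]; rewrite /h -ltnS i_le_b.
  rewrite sumr_const_nat subn1 /= -[_ *+ b]mulr_natl lerD2l.
  rewrite -{1}[b.+1]add0n big_addn addKn.
  rewrite (@eq_big_nat _ _ _ 0 n _ (fun i => w 0%N * 2^-1 ^+ i)); last first.
    by move=> i _; rewrite /h addnK ifF //; apply/negbTE; rewrite -ltnNge ltn_addl.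
  by rewrite -mulr_sumr big_mkord [2 * _]mulrC ler_wpM2l ?sum_halves_le2.
rewrite sum_index_mul_eq_sum_tails -(big_mkord xpredT (fun k => \sum_(k <= j < n) w j)).
rewrite big_ltn //= big_mkord -/T.
have : \sum_(1 <= k < n) \sum_(k <= j < n) w j <= \sum_(1 <= k < b.+1 + n) h k.
  apply: le_trans (_ : \sum_(1 <= k < n) h k <= _).
    by apply: ler_sum_nat => k; apply: tail_h.
  by rewrite (@big_cat_nat _ _ _ n 1 (b.+1 + n)) //= ?leq_addl // lerDl sumr_ge0.
have := w_ge0 0%N; lra.
Qed.

Lemma gauss_sum_succ n : (2 * \sum_(j < n) j.+1 = n * n.+1)%N.
Proof.
by elim: n => [|n IH]; rewrite ?big_ord0 // big_ord_recr /= mulnDr IH -mulnDl addn2 mulnC.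
Qed.

Lemma sumn_le_size_mul (s : seq nat) c :
  (forall x, x \in s -> x < c)%N -> (sumn s <= size s * c)%N.
Proof.
elim: s => [|x s IH] //= lt_c; rewrite mulSn leq_add //; first exact/ltnW/lt_c/mem_head.
by apply: IH => y y_s; rewrite lt_c // mem_behead.
Qed.

Lemma big_ord_rev_levels (R : Type) (idx : R) (op : Monoid.com_law idx)
    (F : int -> R) (lo : int) (M N : nat) :
  (M < N)%N -> (forall l, l < lo -> F l = idx) ->
  (forall i : nat, (M < i < N)%N -> F (lo + i%:Z) = idx) ->
  \big[op/idx]_(j < N) F (lo + M%:Z - j%:Z) = \big[op/idx]_(i < N) F (lo + i%:Z).
Proof.
move=> lt_MN F_below F_above.
rewrite -(big_mkord xpredT (fun j => F (lo + M%:Z - j%:Z))).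
rewrite -(big_mkord xpredT (fun i => F (lo + i%:Z))).
rewrite !(@big_cat_nat _ _ _ M.+1 0 N) //= [X in op _ X]big1_seq; last first.
  by move=> j; rewrite mem_index_iota => /andP[_ /andP[? ?]]; apply: F_below; lia.
rewrite [X in _ = op _ X]big1_seq; last first.
  by move=> i; rewrite mem_index_iota => /andP[_ /andP[? ?]]; apply: F_above; lia.
rewrite !Monoid.mulm1 big_nat_rev; apply: eq_big_nat => i /andP[_ i_le_M].
by congr F; lia.
Qed.

Lemma sum_scan_count (Af : int -> int) (fuel : nat) (l : int) :
  (forall l, 0 <= Af l) ->
  (\sum_(1 <= x < (\sum_(j < fuel) `|Af (l - j%:Z)%R|).+1) scan_count Af l x%:Z fuel
   = \sum_(j < fuel) j.+1 * `|Af (l - j%:Z)%R|)%N.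
Proof.
move=> Af_ge0; elim: fuel l => [|n IH] l; first by rewrite !big_ord0 big_geq.
rewrite !big_ord_recl /= subr0 mul1n.
rewrite (eq_bigr (fun i : 'I_n => `|Af (l - 1 - i%:Z)%R|)%N); last first.
  by move=> i _; do 2 f_equal; rewrite /bump /=; lia.
rewrite [in RHS](eq_bigr (fun i : 'I_n =>
    `|Af (l - 1 - i%:Z)%R| + i.+1 * `|Af (l - 1 - i%:Z)%R|)%N); last first.
  by move=> i _; rewrite /bump /= add1n mulSn (_ : l - i.+1%:Z = l - 1 - i%:Z) //; lia.
rewrite big_split /= -IH.
(* The draws x <= a stop at level l; the draws a < x <= a + s go on to level l - 1 with x - a. *)
set a := `|Af l|%N; set s := (\sum_(j < n) _)%N.
have Af_l : Af l = a%:Z by rewrite /a gez0_abs.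
rewrite (@big_cat_nat _ _ _ a.+1) //=; last by rewrite ltnS leq_addr.
rewrite (@eq_big_nat _ _ _ 1 a.+1 _ (fun=> 1%N)); last first.
  by move=> x /andP[_ x_le_a]; rewrite Af_l ifT //; lia.
rewrite sum_nat_const_nat subn1 muln1 /= -addnS -[a.+1]add1n big_addn addKn.
rewrite (@eq_big_nat _ _ _ 1 s.+1 _ (fun y => 1 + scan_count Af (l - 1) y%:Z n)%N); last first.
  move=> y /andP[y_ge1 _]; rewrite Af_l ifF ?add1n; last by lia.
  by congr (scan_count _ _ _ _).+1; lia.
by rewrite big_split /= sum_nat_const_nat subn1 muln1.
Qed.

Definition scaled_weight (lo : int) (N : nat) (ms : nat -> seq nat) (G l : int) : rat :=
  (SS lo N ms l)%:R * (2%:R : rat) ^ l * (2%:R : rat) ^ G.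

Definition Ascan (lo : int) (N : nat) (ms : nat -> seq nat) (G : int) (j : nat) : nat :=
  `|Alev lo N ms G (lambda lo N ms - j%:Z)|.

Section Levels.

Variables (lo : int) (N : nat) (ms : nat -> seq nat) (G : int).

Local Notation SS := (SS lo N ms).
Local Notation A := (Alev lo N ms G).
Local Notation W := (scaled_weight lo N ms G).

Lemma scaled_weight_ge0 l : 0 <= W l.
Proof. by rewrite !mulr_ge0 // exprz_ge0. Qed.

Lemma Alev_ge0 l : 0 <= A l.
Proof.
by rewrite /Alev; case: ifP => // _; rewrite addr_ge0 // floor_ge0 -/(W l) scaled_weight_ge0.
Qed.

Lemma scaled_weight_le_Alev l : W l <= (A l)%:~R.
Proof.
rewrite /Alev; case: ifP => [_|]; first exact/ltW/floorD1_gt.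
by rewrite lt0n => /negbFE/eqP SS0; rewrite /scaled_weight SS0 !mul0r.
Qed.

Lemma Alev_le_scaled_weight l : (A l)%:~R <= W l + 1.
Proof.
rewrite /Alev; case: ifP => _; last by rewrite addr_ge0 ?scaled_weight_ge0.
by rewrite intrD lerD2r floor_le.
Qed.

Lemma Alev_SS0 l : SS l = 0%N -> A l = 0.
Proof. by rewrite /Alev => ->. Qed.

Lemma SS_below l : l < lo -> SS l = 0%N.
Proof. by move=> lt_l_lo; rewrite /Defs.SS leNgt lt_l_lo. Qed.

Lemma SS_level i : (i < N)%N -> SS (lo + i%:Z) = sumn (ms i).
Proof.
move=> lt_iN; rewrite /Defs.SS ifT; last by apply/andP; split; lia.
by rewrite addrAC subrr add0r.
Qed.

Hypothesis nonempty : (0 < total_count N ms)%N.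

Let top := (\max_(i < N | ms i != [::]) i)%N.

Lemma top_spec :
  [/\ (top < N)%N, ms top != [::] & forall i, (top < i < N)%N -> ms i = [::]].
Proof.
have [i0 ms_i0] : exists i0 : 'I_N, ms i0 != [::].
  apply/existsP; apply: contraTT nonempty; rewrite negb_exists => /forallP ms0.
  by rewrite -leqNgt /total_count big1 // => i _; move: (ms0 i); rewrite negbK => /eqP ->.
have := @eq_bigmax_cond _ (fun i : 'I_N => ms i != [::]) (fun i : 'I_N => i : nat).
case=> [|iM ms_iM top_iM]; first by apply/card_gt0P; exists i0.
have -> : top = iM := top_iM.
split=> [|//|i /andP[lt_iM_i lt_iN]]; first exact: ltn_ord.
apply/eqP; apply: contraTT lt_iM_i => ms_i; rewrite -leqNgt -top_iM.
exact: (leq_bigmax_cond (Ordinal lt_iN) ms_i).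
Qed.

Lemma SS_above_top i : (top < i)%N -> SS (lo + i%:Z) = 0%N.
Proof.
have [_ _ ms_above] := top_spec; move=> lt_top_i.
case: (ltnP i N) => [lt_iN | le_Ni]; first by rewrite SS_level // ms_above // lt_top_i.
by rewrite /Defs.SS ifF //; apply/negbTE; rewrite negb_and -!ltNge; apply/orP; right; lia.
Qed.

Lemma big_levels_from_top (R : Type) (idx : R) (op : Monoid.com_law idx)
    (F : int -> R) :
  (forall l, SS l = 0%N -> F l = idx) ->
  \big[op/idx]_(j < N) F (lambda lo N ms - j%:Z) = \big[op/idx]_(i < N) F (lo + i%:Z).
Proof.
have [lt_top_N _ _] := top_spec; move=> F_idx.
apply: big_ord_rev_levels => // [l /SS_below | i /andP[/SS_above_top SS0 _]];
  exact: F_idx.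
Qed.

Local Notation a := (Ascan lo N ms G).

Lemma Atot_from_top : Atot lo N ms G = (\sum_(j < N) a j)%:Z.
Proof.
rewrite /Atot -(@big_levels_from_top _ _ _ _ Alev_SS0) -natz natr_sum.
by apply: eq_bigr => j _; rewrite natz /Ascan gez0_abs ?Alev_ge0.
Qed.

Lemma expected_scanned_from_top :
  expected_scanned lo N ms G = (\sum_(j < N) j.+1 * a j)%N%:R / (\sum_(j < N) a j)%N%:R.
Proof.
rewrite /expected_scanned Atot_from_top absz_nat -pmulrn mulrC.
by rewrite -natr_sum sum_scan_count //; apply: Alev_ge0.
Qed.

Variable b : nat.
Hypothesis normed : normalized b N ms.

Lemma sum_SS_from_top_le :
  (\sum_(j < N) SS (lambda lo N ms - j%:Z) <= total_count N ms * 2 ^ b)%N.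
Proof.
rewrite (@big_levels_from_top _ _ _ SS (fun _ => id)) /total_count big_distrl /=.
apply: leq_sum => i _; rewrite SS_level // sumn_le_size_mul // => x /(normed (ltn_ord i)).
by case/andP.
Qed.

Lemma SS_top_ge : (2 ^ b.-1 <= SS (lambda lo N ms))%N.
Proof.
have [lt_top_N ms_top _] := top_spec; rewrite /lambda -/top SS_level //.
move: ms_top (normed lt_top_N); case: (ms top) => [|x s] //= _.
by move=> /(_ x (mem_head _ _)) /andP[le_x _]; apply: leq_trans le_x (leq_addr _ _).
Qed.

Hypothesis few_values : (total_count N ms < 2 ^ b)%N.

Lemma scaled_weight_tail_geom k : (0 < b)%N ->
  2 ^+ k * \sum_(k <= j < N) W (lambda lo N ms - j%:Z)
    <= 2 ^+ b.+1 * W (lambda lo N ms).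
Proof.
move=> b_gt0; set lam := lambda lo N ms; pose P : rat := 2 ^ lam * 2 ^ G.
have P_ge0 : 0 <= P by rewrite mulr_ge0 // exprz_ge0.
have W_shift j : W (lam - j%:Z) = (SS (lam - j%:Z))%:R * P / 2 ^+ j.
  by rewrite /scaled_weight expfzDr // -exprnN /P; ring.
have term_le j : (k <= j)%N -> 2 ^+ k * W (lam - j%:Z) <= (SS (lam - j%:Z))%:R * P.
  move=> le_kj; have SP_ge0 : 0 <= (SS (lam - j%:Z))%:R * P by rewrite mulr_ge0.
  rewrite W_shift mulrCA ler_piMr //.
  by rewrite ler_pdivrMr ?exprn_gt0 // mul1r ler_eXn2l ?ltr1n.
have tail_le : 2 ^+ k * \sum_(k <= j < N) W (lam - j%:Z)
    <= (\sum_(j < N) SS (lam - j%:Z))%N%:R * P.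
  rewrite mulr_sumr natr_sum mulr_suml.
  rewrite -(big_mkord xpredT (fun j => (SS (lam - j%:Z))%:R * P)).
  apply: le_trans (_ : \sum_(k <= j < N) (SS (lam - j%:Z))%:R * P <= _).
    by apply: ler_sum_nat => j /andP[le_kj _]; apply: term_le.
  have SP_ge0 j : 0 <= (SS (lam - j%:Z))%:R * P by rewrite mulr_ge0.
  case: (leqP k N) => [le_kN | /ltnW le_Nk].
    by rewrite [X in _ <= X](@big_cat_nat _ _ _ k) //= lerDr sumr_ge0.
  by rewrite [X in X <= _]big_geq // sumr_ge0.
apply: le_trans tail_le _.
have W_top : W lam = (SS lam)%:R * P by rewrite /scaled_weight /P mulrA.
rewrite W_top mulrA ler_wpM2r // -natrX -natrM ler_nat.
apply: leq_trans (leq_mul (leqnn _) SS_top_ge).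
rewrite -expnD (_ : b.+1 + b.-1 = b + b)%N; last by rewrite addSnnS prednK.
rewrite expnD; apply: leq_trans sum_SS_from_top_le _.
exact: leq_mul (ltnW few_values) (leqnn _).
Qed.

Lemma scanned_sum_le : (2 <= b)%N ->
  (\sum_(j < N) j.+1 * a j)%N%:R
    <= (2 * b)%:R * (\sum_(j < N) a j)%N%:R + (N * N.+1)%:R / 2 :> rat.
Proof.
move=> b_ge2; pose w j := W (lambda lo N ms - j%:Z).
have a_eq j : (a j)%:R = (A (lambda lo N ms - j%:Z))%:~R :> rat.
  by rewrite pmulrn /Ascan gez0_abs // Alev_ge0.
have w_ge0 j : 0 <= w j := scaled_weight_ge0 _.
have w_le_a j : w j <= (a j)%:R by rewrite a_eq scaled_weight_le_Alev.
have a_le_w j : (a j)%:R <= w j + 1 by rewrite a_eq Alev_le_scaled_weight.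
have [lt_top_N _ _] := top_spec.
have tails k : (k < N)%N -> 2 ^+ k * \sum_(k <= j < N) w j <= 2 ^+ b.+1 * w 0%N.
  by move=> _; rewrite /w subr0 scaled_weight_tail_geom // ltnW.
have N_gt0 : (0 < N)%N := leq_ltn_trans (leq0n _) lt_top_N.
have := sum_index_mul_le_of_geometric_tails N_gt0 w_ge0 tails.
have rounding : (\sum_(j < N) j.+1 * a j)%N%:R
    <= \sum_(j < N) j.+1%:R * w j + (N * N.+1)%:R / 2 :> rat.
  rewrite -gauss_sum_succ natrM mulrAC divff ?mul1r ?pnatr_eq0 // !natr_sum -big_split /=.
  apply: ler_sum => j _; rewrite natrM -[X in _ <= _ + X]mulr1 -mulrDr.
  exact: ler_wpM2l.
have T_le : \sum_(j < N) w j <= (\sum_(j < N) a j)%N%:R by rewrite natr_sum ler_sum.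
have T_ge0 : 0 <= \sum_(j < N) w j by rewrite sumr_ge0.
have w0_ge0 := w_ge0 0%N.
have b2 : 2 <= b%:R :> rat by rewrite (ler_nat _ 2).
rewrite natrM; nra.
Qed.

End Levels.

Theorem mainTheorem13 (b K N : nat) (lo G : int) (ms : nat -> seq nat) :
  (2 <= b)%N ->
  (1 <= K)%N ->
  normalized b N ms ->
  (total_count N ms < 2 ^ b)%N ->
  (1 <= total_count N ms)%N ->
  (2 ^ K)%:Z <= Atot lo N ms G ->
  Atot lo N ms G < (2 ^ b)%:Z ->
  expected_scanned lo N ms G
    <= (2 * b)%:R + (N * N.+1)%:R / (2 ^ K.+1)%:R.
Proof.
move=> b_ge2 _ normed few_values nonempty A_ge _.
rewrite expected_scanned_from_top //.
have := scanned_sum_le lo G nonempty normed few_values b_ge2.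
move: A_ge; rewrite Atot_from_top // lez_nat.
set T := (\sum_(j < N) Ascan lo N ms G j)%N.
set S := (\sum_(j < N) j.+1 * Ascan lo N ms G j)%N.
set Q : rat := (N * N.+1)%:R.
rewrite -(ler_nat rat) expnS [(2 * _)%:R]natrM => T_ge S_le.
set c : rat := (2 ^ K)%:R in T_ge *.
have c_gt0 : 0 < c by rewrite ltr0n expn_gt0.
rewrite ler_pdivrMr ?(lt_le_trans c_gt0) // mulrDl.
have Qc_ge0 : 0 <= Q / (2 * c) by rewrite divr_ge0 // mulr_ge0 // ltW.
have : Q / 2 <= Q / (2 * c) * T%:R.
  apply: le_trans (ler_wpM2l Qc_ge0 T_ge).
  by rewrite invfM mulrA mulfVK ?gt_eqF.
lra.
Qed.
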